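(* Let $p(x)=\sum_k a_{2k}x^{2k}\in\mathbb{Q}[x]$ have only even powers of $x$. Let $R=\mathbb{Q}[x_a,x_b,x_c,x_d]/(x_a+x_b-x_c-x_d)$, $w=p(x_c)+p(x_d)-p(x_a)-p(x_b)$, and let $\bar\cdot:R\to R$ be the ring homomorphism with $\bar x_a=-x_b$, $\bar x_b=-x_a$, $\bar x_c=-x_d$, $\bar x_d=-x_c$; applying it to the entries of maps induces an endofunctor $\bar\cdot$ of $\mathrm{hmf}_2$ which is the identity on objects and an involution on morphisms. Let $\mathcal F$ be the grading shift functor $\{2\}$ and $\mathcal G$ the identity functor on $\mathrm{hmf}_2$, and let $f:\mathcal F\to\mathcal G$ be the natural transformation given on each object by multiplication by $x_a+x_b$. Then there is an operation $\partial:\mathrm{Hom}_{\mathrm{hmf}_2}(A,B)\to\mathrm{Hom}_{\mathrm{hmf}_2}(\mathcal G A,\mathcal F B)$ such that $\mathcal C=\mathrm{hmf}_2$, $\mathcal F,\mathcal G,\bar\cdot,f,\partial$ satisfy: (1) $\partial$ is $\mathbb{Z}$-linear; (2) $\mathcal G(\phi-\bar\phi)=f_B\,\partial\phi$ and $\mathcal F(\phi-\bar\phi)=\partial\phi\,f_A$ for all $\phi\in\mathrm{Hom}(A,B)$; (3) $\partial(\psi\phi)=\partial\psi\,\mathcal G\phi+\mathcal F\bar\psi\,\partial\phi=\partial\psi\,\mathcal G\bar\phi+\mathcal F\psi\,\partial\phi$ for composable $\phi,\psi$.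
   Context: Matrix factorizations over a graded commutative $\mathbb{Q}$-algebra $R$ with homogeneous potential $w$: free graded $C=C^0\oplus C^1$ with $d^0:C^0\to C^1$, $d^1:C^1\to C^0$ of $q$-degree $\deg(w)/2$, $d^1d^0=w=d^0d^1$; $\mathrm{hmf}_w(R)$ is the homotopy category (degree-0 morphisms modulo homotopy); $\{k\}$ is a $q$-shift (if $p$ is not homogeneous, $q$-gradings are ignored). For $uv=w$, $K(u;v)$ has $C^0=R$, $C^1=R\{(\deg v-\deg u)/2\}$, $d^0=u$, $d^1=v$. With $n+1=\deg p$, $v_1=x_c-x_a$, $v_2=(x_c-x_a)(x_c-x_b)$, set $C_p(D_r)=K(w/v_1;v_1)\{n-1\}$ and $C_p(D_s)=K(w/v_2;v_2)\{-1\}$ (the complexes of an oriented smoothing and a singular crossing). $\mathrm{hmf}_2$ is the full subcategory of $\mathrm{hmf}_w(R)$ whose objects are finite direct sums of shifts (in $q$-grading and $\mathbb{Z}/2$-grading) of $C_p(D_r)$ and $C_p(D_s)$. *)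

From HB Require Import structures.
From mathcomp Require Import all_boot all_order all_algebra.
From mathcomp Require Import finmap.
From mathcomp Require Export mpoly.
Set Implicit Arguments. Unset Strict Implicit. Unset Printing Implicit Defensive.
Import Order.TTheory GRing.Theory Num.Theory.
Local Open Scope ring_scope.

(* R = Q[x_a,x_b,x_c,x_d]/(x_a+x_b-x_c-x_d) is presented as Q[x_a,x_b,x_c]
   with x_d := x_a + x_b - x_c (a graded ring isomorphism, deg x = 2). *)
Notation Rg := {mpoly rat[3]}.

Definition xa : Rg := 'X_(Ordinal (isT : (0 < 3)%N)).
Definition xb : Rg := 'X_(Ordinal (isT : (1 < 3)%N)).
Definition xc : Rg := 'X_(Ordinal (isT : (2 < 3)%N)).
Definition xd : Rg := xa + xb - xc.

Definition bar (r : Rg) : Rg := r \mPo [tuple - xb; - xa; - xd].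

(* q-grading: deg x_a = deg x_b = deg x_c = 2; r is homogeneous of q-degree e
   (0 is homogeneous of every degree) *)
Definition qhom (e : int) (r : Rg) : Prop :=
  forall m, m \in msupp r -> ((2 * mdeg m)%N)%:Z = e.

(* a summand of an object of hmf_2:
   (kind, q, z) = C_p(D_r){q} (kind = false) or C_p(D_s){q} (kind = true),
   shifted by [1] in the Z/2-grading iff z = true. *)
Definition summand := (bool * int * bool)%type.
Definition skind (s : summand) : bool := s.1.1.
Definition sq (s : summand) : int := s.1.2.
Definition sz (s : summand) : bool := s.2.

(* objects of hmf_2: finite direct sums of shifted C_p(D_r), C_p(D_s) *)
Record obj := Obj { osize : nat; osumm : 'I_osize -> summand }.

Definition shift2 (A : obj) : obj :=
  @Obj (osize A) (fun i : 'I_(osize A) =>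
         (skind (@osumm A i), sq (@osumm A i) + 2, sz (@osumm A i))).

(* degree-0 (in Z/2) maps between direct sums: a pair (f^0, f^1) of matrices *)
Definition mor (A B : obj) := ('M[Rg]_(osize B, osize A) * 'M[Rg]_(osize B, osize A))%type.

Definition mcomp (A B C : obj) (g : mor B C) (f : mor A B) : mor A C :=
  (g.1 *m f.1, g.2 *m f.2).
Definition madd (A B : obj) (f g : mor A B) : mor A B := (f.1 + g.1, f.2 + g.2).
Definition msub (A B : obj) (f g : mor A B) : mor A B := (f.1 - g.1, f.2 - g.2).
Definition mbar (A B : obj) (f : mor A B) : mor A B := (map_mx bar f.1, map_mx bar f.2).
Definition Fm (A B : obj) (f : mor A B) : mor (shift2 A) (shift2 B) := f.
Definition fnat (A : obj) : mor (shift2 A) A := ((xa + xb)%:M, (xa + xb)%:M).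

Section MF.
Variable p : {poly rat}.
(* u1 = w / v1 and u2 = w / v2 (given with their defining equations) *)
Variables u1 u2 : Rg.

Definition peval (r : Rg) : Rg := (map_poly (fun c : rat => c%:MP) p).[r].
Definition w : Rg := peval xc + peval xd - peval xa - peval xb.
Definition v1 : Rg := xc - xa.
Definition v2 : Rg := (xc - xa) * (xc - xb).

(* p homogeneous (then the q-grading is used; otherwise it is ignored) *)
Definition phom : bool := (p != 0) && (p == lead_coef p *: ('X ^+ (size p).-1 : {poly rat})).
(* n with n + 1 = deg p *)
Definition nn : int := (size p)%:Z - 2.

(* differentials of a summand: K(u;v) has d^0 = u, d^1 = v; the Z/2-shift
   [1] swaps components and negates the differentials *)
Definition sd0 (s : summand) : Rg :=
  let u := if skind s then u2 else u1 in
  let v := if skind s then v2 else v1 in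
  if sz s then - v else u.
Definition sd1 (s : summand) : Rg :=
  let u := if skind s then u2 else u1 in
  let v := if skind s then v2 else v1 in
  if sz s then - u else v.

(* q-degrees of the generators of C^0 and C^1 of a summand:
   C_p(D_r){q} = K(w/v1;v1){n-1+q}: C^0 gen. in degree n-1+q, C^1 in degree q;
   C_p(D_s){q} = K(w/v2;v2){-1+q}: C^0 gen. in degree q-1, C^1 in degree 2-n+q *)
Definition g0u (s : summand) : int := if skind s then sq s - 1 else sq s + nn - 1.
Definition g1u (s : summand) : int := if skind s then sq s + 2 - nn else sq s.
Definition sg0 (s : summand) : int := if sz s then g1u s else g0u s.
Definition sg1 (s : summand) : int := if sz s then g0u s else g1u s.

Definition D0 (A : obj) : 'M[Rg]_(osize A) := diag_mx (\row_i sd0 (@osumm A i)).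
Definition D1 (A : obj) : 'M[Rg]_(osize A) := diag_mx (\row_i sd1 (@osumm A i)).

Definition graded (m n : nat) (deg : 'I_m -> 'I_n -> int) (M : 'M[Rg]_(m, n)) : Prop :=
  phom -> forall i j, qhom (deg i j) (M i j).

Definition is_mor (A B : obj) (f : mor A B) : Prop :=
  [/\ D0 B *m f.1 = f.2 *m D0 A,
      D1 B *m f.2 = f.1 *m D1 A,
      graded (fun i j => sg0 (@osumm A j) - sg0 (@osumm B i)) f.1 &
      graded (fun i j => sg1 (@osumm A j) - sg1 (@osumm B i)) f.2].

(* homotopy (homotopies of Z/2-degree 1 and q-degree -deg(w)/2 = -(n+1)) *)
Definition htpc (A B : obj) (f g : mor A B) : Prop :=
  exists (h0 h1 : 'M[Rg]_(osize B, osize A)),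
    [/\ f.1 - g.1 = D1 B *m h0 + h1 *m D0 A,
        f.2 - g.2 = D0 B *m h1 + h0 *m D1 A,
        graded (fun i j => sg0 (@osumm A j) - sg1 (@osumm B i) - (nn + 1)) h0 &
        graded (fun i j => sg1 (@osumm A j) - sg0 (@osumm B i) - (nn + 1)) h1].

End MF.

From HB Require Import structures.
From mathcomp Require Import all_boot all_order all_algebra.
From mathcomp Require Import finmap mpoly.
From mathcomp Require Import ring.
Set Implicit Arguments. Unset Strict Implicit. Unset Printing Implicit Defensive.
Import Order.TTheory GRing.Theory Num.Theory.
Local Open Scope ring_scope.

(* The involution fixes w because p is even, and it fixes v1 and v2; hence it
   fixes u1 and u2 and every differential of hmf_2.  Each generator satisfies
   bar x = x - (x_a + x_b), so x_a + x_b divides r - bar r for every r, and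
   we take for del phi the matrix of quotients (phi - bar phi) / (x_a + x_b).
   Division commutes with multiplication by bar-fixed matrices, so del maps
   morphisms to morphisms and homotopies to homotopies, and (1)-(3) hold on the
   nose: (3) is the twisted Leibniz rule for the difference quotient.  del
   lowers q-degrees by 2, because a factor of a homogeneous polynomial is
   homogeneous. *)

Section DhomogMul.
Variables (n : nat) (R : idomainType).
Implicit Types (s q : {mpoly R[n]}).

Lemma dhomog_mul_factor s q k d : s \is k.-homog -> s != 0 -> q != 0 ->
  s * q \is d.-homog -> exists2 e, d = (k + e)%N & q \is e.-homog.
Proof.
move=> hs nzs nzq hsq; set K := msize q.
have q_sum : q = \sum_(e < K) pihomog mdeg e q by apply: pihomog_partitionE.
have piM (e : 'I_K) : s * pihomog mdeg e q = pihomog mdeg (k + e) (s * q).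
  have -> : s * q = \sum_(j < K) s * pihomog mdeg j q by rewrite {1}q_sum mulr_sumr.
  rewrite raddf_sum (bigD1 e) //= (pihomog_dE (dhomogM hs (pihomogP mdeg e q))).
  rewrite big1 ?addr0 // => j /eqP nj; apply: pihomog_ne0 (dhomogM hs (pihomogP _ _ q)).
  by rewrite eqn_add2l; apply/eqP => /val_inj.
have pi0 (e : 'I_K) : (k + e)%N != d -> pihomog mdeg e q = 0.
  by move=> ne; apply: (mulfI nzs); rewrite piM mulr0 (pihomog_ne0 _ hsq) // eq_sym.
have [e /eqP ke_d | none] := pickP (fun e : 'I_K => (k + e)%N == d); last first.
  by case/negP: nzq; rewrite q_sum big1 // => e _; rewrite pi0 ?none.
exists e; first by [].
rewrite q_sum; apply: (big_ind (fun x : {mpoly R[n]} => x \is e.-homog)).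
- exact: dhomog0.
- exact: dhomogD.
move=> j _; have [->|nej] := eqVneq j e; first exact: pihomogP.
by rewrite pi0 ?dhomog0 // -ke_d eqn_add2l; apply: contra nej => /eqP/val_inj ->.
Qed.

End DhomogMul.

Lemma mpolyX_dhomog1 (n : nat) (R : nzRingType) (i : 'I_n) :
  ('X_i : {mpoly R[n]}) \is 1.-homog.
Proof. by rewrite dhomogX; apply/eqP; exact: mdeg1. Qed.

Section CompHomog.
Variables (n k : nat) (R : comNzRingType) (lq : n.-tuple {mpoly R[k]}).
Hypothesis lq_homog : forall i, tnth lq i \is 1.-homog.

Lemma comp_mpoly_dhomog d p : p \is d.-homog -> p \mPo lq \is d.-homog.
Proof.
move=> hp; rewrite comp_mpolyEX big_seq.
apply: (big_ind (fun x : {mpoly R[k]} => x \is d.-homog)).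
- exact: dhomog0.
- exact: dhomogD.
move=> m /(dhomog_mf hp) <-; apply: dhomogZ; rewrite comp_mpolyX /= mdegE.
apply: (big_rec2 (fun (e : nat) (x : {mpoly R[k]}) => x \is e.-homog)).
  exact: dhomog1.
move=> i e x _ hx; apply: dhomogM hx.
by have := dhomogMn (m i) (lq_homog i); rewrite mul1n.
Qed.

End CompHomog.

Section SubMorphDvd.
Variables (T : comPzRingType) (f : {rmorphism T -> T}) (s : T).

Definition dvd_sub_morph (r : T) : Prop := exists q, r - f r = s * q.

Lemma dvd_sub_morph_fixed r : f r = r -> dvd_sub_morph r.
Proof. by move=> fr; exists 0; rewrite fr subrr mulr0. Qed.

Lemma dvd_sub_morphD a b : dvd_sub_morph a -> dvd_sub_morph b -> dvd_sub_morph (a + b).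
Proof.
by move=> [qa ea] [qb eb]; exists (qa + qb); rewrite rmorphD mulrDr -ea -eb; ring.
Qed.

Lemma dvd_sub_morphM a b : dvd_sub_morph a -> dvd_sub_morph b -> dvd_sub_morph (a * b).
Proof.
move=> [qa ea] [qb eb]; exists (qa * b + f a * qb).
by rewrite rmorphM mulrDr mulrA -ea mulrCA -eb; ring.
Qed.

End SubMorphDvd.

Lemma mpoly_neq0_meval (n : nat) (R : comNzRingType) (v : 'I_n -> R) (r : {mpoly R[n]}) :
  r.@[v] != 0 -> r != 0.
Proof. by apply: contraNneq => ->; rewrite meval0. Qed.

Local Notation xab := (xa + xb).

Section NonZero.
Let at012 (i : 'I_3) : rat := (i : nat)%:R.

Lemma xab_neq0 : xab != 0.
Proof. by apply: (@mpoly_neq0_meval _ _ at012); rewrite mevalD !mevalXU. Qed.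

Lemma v1_neq0 : v1 != 0.
Proof. by apply: (@mpoly_neq0_meval _ _ at012); rewrite mevalB !mevalXU. Qed.

Lemma v2_neq0 : v2 != 0.
Proof. by apply: (@mpoly_neq0_meval _ _ at012); rewrite mevalM !mevalB !mevalXU. Qed.

End NonZero.

HB.instance Definition _ := GRing.RMorphism.copy bar (comp_mpoly [tuple - xb; - xa; - xd]).

Lemma bar_mpolyC c : bar c%:MP = c%:MP. Proof. exact: comp_mpolyC. Qed.

Lemma bar_xa : bar xa = - xb. Proof. by rewrite /bar /xa comp_mpolyXU. Qed.
Lemma bar_xb : bar xb = - xa. Proof. by rewrite /bar /xb comp_mpolyXU. Qed.
Lemma bar_xc : bar xc = - xd. Proof. by rewrite /bar /xc comp_mpolyXU. Qed.
Lemma bar_xd : bar xd = - xc.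
Proof. by rewrite /xd !rmorphB rmorphD /= bar_xa bar_xb bar_xc /xd; ring. Qed.

Lemma bar_X (i : 'I_3) : bar 'X_i = 'X_i - xab.
Proof.
case: i => [[|[|[|//]]] lti].
- have -> : 'X_(Ordinal lti) = xa by rewrite /xa (bool_irrelevance lti isT).
  by rewrite bar_xa; ring.
- have -> : 'X_(Ordinal lti) = xb by rewrite /xb (bool_irrelevance lti isT).
  by rewrite bar_xb; ring.
- have -> : 'X_(Ordinal lti) = xc by rewrite /xc (bool_irrelevance lti isT).
  by rewrite bar_xc /xd; ring.
Qed.

Lemma bar_v1 : bar v1 = v1.
Proof. by rewrite /v1 rmorphB /= bar_xa bar_xc /xd; ring. Qed.

Lemma bar_v2 : bar v2 = v2.
Proof. by rewrite /v2 rmorphM !rmorphB /= bar_xa bar_xb bar_xc /xd; ring. Qed.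

Lemma bar_dhomog d r : r \is d.-homog -> bar r \is d.-homog.
Proof.
apply: comp_mpoly_dhomog => i.
case: i => [[|[|[|//]]] lti]; rewrite (tnth_nth 0) /= dhomogN ?mpolyX_dhomog1 //.
by apply: dhomogD; [apply: dhomogD|rewrite dhomogN]; exact: mpolyX_dhomog1.
Qed.

Section EvenPotential.
Variable p : {poly rat}.
Hypothesis p_even : forall i : nat, odd i -> p`_i = 0.

Lemma peval_opp r : peval p (- r) = peval p r.
Proof.
rewrite /peval !horner_coef; apply: eq_bigr => i _; rewrite coef_map_id0 //.
have [odd_i|even_i] := boolP (odd i); first by rewrite p_even // !mul0r.
by rewrite exprNn -signr_odd (negbTE even_i) expr0 mul1r.
Qed.

Lemma bar_peval r : bar (peval p r) = peval p (bar r).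
Proof.
rewrite /peval !horner_coef rmorph_sum /=; apply: eq_bigr => i _.
by rewrite rmorphM rmorphXn /= coef_map_id0 ?bar_mpolyC.
Qed.

Lemma bar_w : bar (w p) = w p.
Proof.
rewrite /w !rmorphB rmorphD /= !bar_peval bar_xa bar_xb bar_xc bar_xd !peval_opp.
by ring.
Qed.

Lemma bar_cofactor_w u v : v != 0 -> bar v = v -> u * v = w p -> bar u = u.
Proof. by move=> nzv bv uv; apply: (mulIf nzv); rewrite uv -{1}bv -rmorphM /= uv bar_w. Qed.

End EvenPotential.

Lemma dvd_sub_bar r : dvd_sub_morph bar xab r.
Proof.
elim/mpolyind: r => [|c m r _ _ dr]; first exact: dvd_sub_morph_fixed (rmorph0 _).
apply: dvd_sub_morphD dr; rewrite -mul_mpolyC; apply: dvd_sub_morphM.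
  exact: dvd_sub_morph_fixed (bar_mpolyC c).
rewrite mpolyXE_id; apply: (big_ind (dvd_sub_morph bar xab)).
- exact: dvd_sub_morph_fixed (rmorph1 _).
- exact: dvd_sub_morphM.
move=> i _; elim: (m i) => [|e ih]; first exact: dvd_sub_morph_fixed (rmorph1 _).
by rewrite exprS; apply: dvd_sub_morphM ih; exists 1; rewrite /= bar_X; ring.
Qed.

Lemma dvd_sub_bar_eq r : exists q, r - bar r == xab * q.
Proof. by have [q e] := dvd_sub_bar r; exists q; apply/eqP. Qed.

Definition dbar (r : Rg) : Rg := xchoose (dvd_sub_bar_eq r).

Lemma dbarP r : xab * dbar r = r - bar r.
Proof. by rewrite (eqP (xchooseP (dvd_sub_bar_eq r))). Qed.

Lemma xab_mulI a b : xab * a = xab * b -> a = b.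
Proof. exact: (mulfI xab_neq0). Qed.

Lemma dbar_eq r q : r - bar r = xab * q -> dbar r = q.
Proof. by rewrite -dbarP => /xab_mulI. Qed.

Lemma dbarB a b : dbar (a - b) = dbar a - dbar b.
Proof. by apply: dbar_eq; rewrite rmorphB opprD addrACA -opprD -!dbarP mulrBr. Qed.

HB.instance Definition _ := GRing.isZmodMorphism.Build _ _ dbar dbarB.

Lemma qhom_dhomog e r : qhom e r -> r != 0 ->
  exists2 d, e = (2 * d)%N & r \is d.-homog.
Proof.
move=> hr nzr; have : msupp r != [::] by rewrite msupp_eq0.
case E: (msupp r) => [|m0 ms] // _.
have m0_in : m0 \in msupp r by rewrite E mem_head.
exists (mdeg m0); first by rewrite (hr m0 m0_in).
apply/dhomogP => m /hr; rewrite -(hr m0 m0_in).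
by move/eqP; rewrite eqz_nat eqn_pmul2l // => /eqP.
Qed.

Lemma dhomog_qhom d r : r \is d.-homog -> qhom (2 * d)%N r.
Proof. by move/dhomogP => hr m /hr ->. Qed.

Lemma qhom_dbar e r : qhom e r -> qhom (e - 2) (dbar r).
Proof.
move=> hr; have [->|nz_dbar] := eqVneq (dbar r) 0; first by move=> m; rewrite msupp0.
have nz_diff : r - bar r != 0 by rewrite -dbarP mulf_neq0 ?xab_neq0.
have nzr : r != 0 by apply: contraNneq nz_diff => ->; rewrite rmorph0 subrr.
have [d -> hd] := qhom_dhomog hr nzr.
have xab_homog : xab \is 1.-homog by apply: dhomogD; exact: mpolyX_dhomog1.
have hdiff : xab * dbar r \is d.-homog by rewrite dbarP dhomogD ?dhomogN ?bar_dhomog.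
have [d' -> hd'] := dhomog_mul_factor xab_homog xab_neq0 nz_dbar hdiff.
by rewrite add1n mulnS PoszD addrAC subrr add0r; exact: dhomog_qhom.
Qed.

Section MatrixDbar.
Implicit Types (m n k l : nat).

Definition mdbar m n (M : 'M[Rg]_(m, n)) : 'M[Rg]_(m, n) := map_mx dbar M.

Lemma mdbarP m n (M : 'M[Rg]_(m, n)) : xab *: mdbar M = M - map_mx bar M.
Proof. by apply/matrixP => i j; rewrite !mxE dbarP. Qed.

Lemma scalemx_xab_inj m n (M N : 'M[Rg]_(m, n)) : xab *: M = xab *: N -> M = N.
Proof.
move=> /matrixP eqMN; apply/matrixP => i j.
by have := eqMN i j; rewrite !mxE => /xab_mulI.
Qed.

Lemma mdbarD m n (M N : 'M[Rg]_(m, n)) : mdbar (M + N) = mdbar M + mdbar N.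
Proof. exact: map_mxD. Qed.

Lemma mdbarB m n (M N : 'M[Rg]_(m, n)) : mdbar (M - N) = mdbar M - mdbar N.
Proof. exact: map_mxB. Qed.

Lemma mdbarM m n l (M : 'M[Rg]_(m, n)) (N : 'M[Rg]_(n, l)) :
  mdbar (M *m N) = mdbar M *m N + map_mx bar M *m mdbar N.
Proof.
apply: scalemx_xab_inj; rewrite scalerDr scalemxAl scalemxAr !mdbarP map_mxM.
by rewrite mulmxBl mulmxBr addrA subrK.
Qed.

Lemma mdbarM_bar m n l (M : 'M[Rg]_(m, n)) (N : 'M[Rg]_(n, l)) :
  mdbar (M *m N) = mdbar M *m map_mx bar N + M *m mdbar N.
Proof.
apply: scalemx_xab_inj; rewrite scalerDr scalemxAl scalemxAr !mdbarP map_mxM.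
by rewrite mulmxBl mulmxBr [RHS]addrC addrA subrK.
Qed.

Lemma mdbar_fixed m n (M : 'M[Rg]_(m, n)) : map_mx bar M = M -> mdbar M = 0.
Proof. by move=> barM; apply: scalemx_xab_inj; rewrite mdbarP barM subrr scaler0. Qed.

Lemma mdbar_mull m n l (M : 'M[Rg]_(m, n)) (N : 'M[Rg]_(n, l)) :
  map_mx bar M = M -> mdbar (M *m N) = M *m mdbar N.
Proof. by move=> barM; rewrite mdbarM_bar mdbar_fixed // mul0mx add0r. Qed.

Lemma mdbar_mulr m n l (M : 'M[Rg]_(m, n)) (N : 'M[Rg]_(n, l)) :
  map_mx bar N = N -> mdbar (M *m N) = mdbar M *m N.
Proof. by move=> barN; rewrite mdbarM (mdbar_fixed barN) mulmx0 addr0. Qed.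

Lemma mdbar_intertwine m n k l (X : 'M[Rg]_(m, k)) (P : 'M[Rg]_(k, n))
    (Q : 'M[Rg]_(m, l)) (Y : 'M[Rg]_(l, n)) :
  map_mx bar X = X -> map_mx bar Y = Y -> X *m P = Q *m Y ->
  X *m mdbar P = mdbar Q *m Y.
Proof. by move=> barX barY e; rewrite -mdbar_mull // e mdbar_mulr. Qed.

Lemma mdbar_homotopy m n k l (X : 'M[Rg]_(m, k)) (H : 'M[Rg]_(k, n))
    (K : 'M[Rg]_(m, l)) (Y : 'M[Rg]_(l, n)) (F G : 'M[Rg]_(m, n)) :
  map_mx bar X = X -> map_mx bar Y = Y -> F - G = X *m H + K *m Y ->
  mdbar F - mdbar G = X *m mdbar H + mdbar K *m Y.
Proof. by move=> barX barY e; rewrite -mdbarB e mdbarD mdbar_mull // mdbar_mulr. Qed.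

Lemma mul_scalar_xab_mdbar m n (M : 'M[Rg]_(m, n)) :
  xab%:M *m mdbar M = M - map_mx bar M.
Proof. by rewrite mul_scalar_mx mdbarP. Qed.

Lemma mul_mdbar_scalar_xab m n (M : 'M[Rg]_(m, n)) :
  mdbar M *m xab%:M = M - map_mx bar M.
Proof. by rewrite mul_mx_scalar mdbarP. Qed.

End MatrixDbar.

Definition delm (A B : obj) (phi : mor A B) : mor A (shift2 B) :=
  (mdbar phi.1, mdbar phi.2).

Lemma sg0_shift2 p s : sg0 p (skind s, sq s + 2, sz s) = sg0 p s + 2.
Proof. by case: s => [[[] q] []]; rewrite /sg0 /g0u /g1u /skind /sq /sz /=; ring. Qed.

Lemma sg1_shift2 p s : sg1 p (skind s, sq s + 2, sz s) = sg1 p s + 2.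
Proof. by case: s => [[[] q] []]; rewrite /sg1 /g0u /g1u /skind /sq /sz /=; ring. Qed.

Lemma graded_mdbar p m n (deg deg' : 'I_m -> 'I_n -> int) (M : 'M[Rg]_(m, n)) :
  (forall i j, deg' i j = deg i j - 2) -> graded p deg M -> graded p deg' (mdbar M).
Proof. by move=> deg'E hM hp i j; rewrite deg'E mxE; apply/qhom_dbar/hM. Qed.

Lemma eq_htpc p u1 u2 A B (f g : mor A B) : f = g -> htpc p u1 u2 f g.
Proof.
move=> ->; exists 0, 0; rewrite !subrr !mulmx0 !mul0mx addr0.
by split=> // _ i j m; rewrite mxE msupp0.
Qed.

Section HmfDbar.
Variables (p : {poly rat}) (u1 u2 : Rg).
Hypotheses (bar_u1 : bar u1 = u1) (bar_u2 : bar u2 = u2).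

Lemma bar_D0 A : map_mx bar (D0 u1 u2 A) = D0 u1 u2 A.
Proof.
apply/matrixP => i j; rewrite !mxE rmorphMn /=; congr (_ *+ _); rewrite /sd0.
by case: (osumm i) => [[[] q] []]; rewrite /= ?rmorphN /= ?bar_v1 ?bar_v2 ?bar_u1 ?bar_u2.
Qed.

Lemma bar_D1 A : map_mx bar (D1 u1 u2 A) = D1 u1 u2 A.
Proof.
apply/matrixP => i j; rewrite !mxE rmorphMn /=; congr (_ *+ _); rewrite /sd1.
by case: (osumm i) => [[[] q] []]; rewrite /= ?rmorphN /= ?bar_v1 ?bar_v2 ?bar_u1 ?bar_u2.
Qed.

Lemma is_mor_delm A B (phi : mor A B) :
  is_mor p u1 u2 phi -> is_mor p u1 u2 (delm phi).
Proof.
case: phi => [f0 f1] [e0 e1 g0 g1]; split => /=.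
- exact: mdbar_intertwine (bar_D0 _) (bar_D0 _) e0.
- exact: mdbar_intertwine (bar_D1 _) (bar_D1 _) e1.
- by apply: graded_mdbar g0 => i j /=; rewrite sg0_shift2; ring.
- by apply: graded_mdbar g1 => i j /=; rewrite sg1_shift2; ring.
Qed.

Lemma htpc_delm A B (phi psi : mor A B) :
  htpc p u1 u2 phi psi -> htpc p u1 u2 (delm phi) (delm psi).
Proof.
case: phi psi => [f0 f1] [g0 g1] [h0 [h1 [e0 e1 gh0 gh1]]].
exists (mdbar h0), (mdbar h1); split => /=.
- exact: mdbar_homotopy (bar_D1 _) (bar_D0 _) e0.
- exact: mdbar_homotopy (bar_D0 _) (bar_D1 _) e1.
- by apply: graded_mdbar gh0 => i j /=; rewrite sg1_shift2; ring.
- by apply: graded_mdbar gh1 => i j /=; rewrite sg0_shift2; ring.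
Qed.

End HmfDbar.

Theorem lemma6p2 (p : {poly rat})
  (p_even : forall i : nat, odd i -> p`_i = 0)
  (u1 u2 : {mpoly rat[3]})
  (Hu1 : u1 * v1 = w p) (Hu2 : u2 * v2 = w p) :
  exists del : forall A B : obj, mor A B -> mor A (shift2 B),
    (* del is an operation on Hom-sets of hmf_2 *)
    (forall A B (phi : mor A B), is_mor p u1 u2 phi ->
       is_mor p u1 u2 (del A B phi)) /\
    (forall A B (phi psi : mor A B), is_mor p u1 u2 phi -> is_mor p u1 u2 psi ->
       htpc p u1 u2 phi psi -> htpc p u1 u2 (del A B phi) (del A B psi)) /\
    (* (1) Z-linearity *)
    (forall A B (phi psi : mor A B), is_mor p u1 u2 phi -> is_mor p u1 u2 psi ->
       htpc p u1 u2 (del A B (madd phi psi)) (madd (del A B phi) (del A B psi))) /\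
    (* (2) *)
    (forall A B (phi : mor A B), is_mor p u1 u2 phi ->
       htpc p u1 u2 (msub phi (mbar phi)) (mcomp (fnat B) (del A B phi)) /\
       htpc p u1 u2 (Fm (msub phi (mbar phi))) (mcomp (del A B phi) (fnat A))) /\
    (* (3) *)
    (forall A B C (phi : mor A B) (psi : mor B C),
       is_mor p u1 u2 phi -> is_mor p u1 u2 psi ->
       htpc p u1 u2 (del A C (mcomp psi phi))
         (madd (mcomp (del B C psi) phi) (mcomp (Fm (mbar psi)) (del A B phi))) /\
       htpc p u1 u2 (del A C (mcomp psi phi))
         (madd (mcomp (del B C psi) (mbar phi)) (mcomp (Fm psi) (del A B phi)))).
Proof.
have bar_u1 := bar_cofactor_w p_even v1_neq0 bar_v1 Hu1.
have bar_u2 := bar_cofactor_w p_even v2_neq0 bar_v2 Hu2.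
exists delm; split; [|split; [|split; [|split]]].
- by move=> A B phi; apply: is_mor_delm.
- by move=> A B phi psi _ _; apply: htpc_delm.
- by move=> A B [f0 f1] [g0 g1] _ _; apply: eq_htpc; rewrite /delm /madd /= !mdbarD.
- move=> A B [f0 f1] _; split; apply: eq_htpc; rewrite /delm /msub /mbar /mcomp /fnat /Fm /=.
    by congr (_, _); apply/esym/mul_scalar_xab_mdbar.
  by congr (_, _); apply/esym/mul_mdbar_scalar_xab.
- move=> A B C [f0 f1] [g0 g1] _ _; split; apply: eq_htpc;
    rewrite /delm /madd /mbar /mcomp /Fm /=.
    by rewrite !mdbarM.
  by rewrite !mdbarM_bar.
Qed.
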